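(* Let $G=(\mathbb Z/2)^3$ and write $H^*(G,\mathbb F_2)=\mathbb F_2[x,y,z]$ with $x,y,z$ of degree one dual to the standard basis $e_1,e_2,e_3$ of $G$. Let $\alpha\in H^4(G,\mathbb Z)$ be the integral class whose mod $2$ reduction is $Sq^1(xyz)=x^2yz+xy^2z+xyz^2$. For $g=ae_1+be_2+ce_3\in G$ with $a,b,c\in\{0,1\}$ (written multiplicatively as $g=x^ay^bz^c$), the inverse transgression $\theta_g^*:H^4(G,\mathbb Z)\to H^3(G,\mathbb Z)$ satisfies, after mod $2$ reduction, $$\theta_g^*(\alpha)=a(y^2z+yz^2)+b(x^2z+xz^2)+c(x^2y+xy^2).$$ In particular $\theta_g^*(\alpha)\neq 0$ for every $g\neq 1$.
   Context: For an elementary abelian $2$-group $G$ and $k>0$, mod $2$ reduction $H^k(G,\mathbb Z)\to H^k(G,\mathbb F_2)$ is injective, and integral classes are identified with their reductions. For a finite group $G$ and $g\in G$ with centralizer $Z_G(g)$ (here $Z_G(g)=G$), the inverse transgression $\theta_g$ is the cochain map from inhomogeneous cochains $C^{k+1}(G,\mathbb Z)$ to $C^k(Z_G(g),\mathbb Z)$ given by $\theta_g(\phi)(u_1,\dots,u_k)=(-1)^k\phi(g,u_1,\dots,u_k)+\sum_{i=1}^k(-1)^{i+k}\phi(u_1,\dots,u_i,g_i,u_{i+1},\dots,u_k)$, where $g_i=(u_1\cdots u_i)^{-1}g\,u_1\cdots u_i$; $\theta_g^*$ is the induced map in cohomology. Equivalently, if $\rho_g:Z_G(g)\times\mathbb Z\to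 G$, $(u,t^i)\mapsto ug^i$, and $\nu$ generates $H^1(\mathbb Z,\mathbb Z)$, then $\rho_g^*(w)=\mathrm{res}^G_{Z_G(g)}(w)\otimes1+\theta_g^*(w)\otimes\nu$. *)

From mathcomp Require Import all_boot all_algebra all_fingroup.
Set Implicit Arguments. Unset Strict Implicit. Unset Printing Implicit Defensive.
Import GRing.Theory.

Section Cochains.
Variable gT : finGroupType.

(* A k-cochain is a function on k-lists of group elements (only its values
   on lists of length k matter). *)
Definition cochain (M : Type) := seq gT -> M.

Definition sgnz {M : zmodType} (b : bool) (x : M) : M := if b then (- x)%R else x.

Definition mulpair (i : nat) (s : seq gT) : seq gT :=
  take i s ++ (nth 1%g s i * nth 1%g s i.+1)%g :: drop i.+2 s.

(* coboundary, evaluated on a (k+1)-list s = (g_1,...,g_{k+1}):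
   f(g_2..g_{k+1}) + sum_{i=1}^k (-1)^i f(..,g_i g_{i+1},..) + (-1)^{k+1} f(g_1..g_k) *)
Definition coboundary {M : zmodType} (f : cochain M) : cochain M := fun s =>
  (f (behead s)
   + \sum_(i < (size s).-1) sgnz (odd i.+1) (f (mulpair i s))
   + sgnz (odd (size s)) (f (take (size s).-1 s)))%R.

Definition is_cocycle {M : zmodType} (k : nat) (f : cochain M) : Prop :=
  forall s, size s = k.+1 -> coboundary f s = 0%R.

Definition is_coboundary {M : zmodType} (k : nat) (f : cochain M) : Prop :=
  exists psi : cochain M, forall s, size s = k -> f s = coboundary psi s.

Definition cohomologous {M : zmodType} (k : nat) (f1 f2 : cochain M) : Prop :=
  is_coboundary k (fun s => f1 s - f2 s)%R.

Definition prodg (s : seq gT) : gT := foldr (fun a b => a * b)%g 1%g s.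

(* inverse transgression theta_g on cochains C^{k+1}(G,Z) -> C^k(Z_G(g),Z):
   theta_g(phi)(u_1..u_k) = (-1)^k phi(g,u_1..u_k)
      + sum_{i=1}^k (-1)^{i+k} phi(u_1..u_i, g_i, u_{i+1}..u_k),
   g_i = (u_1...u_i)^{-1} g (u_1...u_i) = g ^ (u_1...u_i). *)
Definition theta (g : gT) (phi : cochain int) : cochain int := fun u =>
  (sgnz (odd (size u)) (phi (g :: u))
   + \sum_(i < size u)
       sgnz (odd (i.+1 + size u))
         (phi (take i.+1 u ++ (g ^ prodg (take i.+1 u))%g :: drop i.+1 u)))%R.

Definition red2 (phi : cochain int) : cochain 'F_2 := fun s => ((phi s)%:~R)%R.

End Cochains.

(* G = (Z/2)^3, written additively as row vectors over F_2 (the group law of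
   the finGroupType structure on 'rV['F_2]_3 is vector addition). *)
Definition G := 'rV['F_2]_3.

(* cup product of degree-one cocycles: the monomial x_{l_1} ... x_{l_n} is
   represented by the cocycle (g_1..g_n) |-> prod_j (g_j)_{l_j}. *)
Definition mono (l : seq 'I_3) : cochain G 'F_2 :=
  fun s => (\prod_(p <- zip l s) p.2 ord0 p.1)%R.

Definition ix : 'I_3 := @Ordinal 3 0 isT.
Definition iy : 'I_3 := @Ordinal 3 1 isT.
Definition iz : 'I_3 := @Ordinal 3 2 isT.

Definition sq1xyz : cochain G 'F_2 := fun s =>
  (mono [:: ix; ix; iy; iz] s + mono [:: ix; iy; iy; iz] s
   + mono [:: ix; iy; iz; iz] s)%R.

Definition theta_target (g : G) : cochain G 'F_2 := fun s =>
  (g ord0 ix * (mono [:: iy; iy; iz] s + mono [:: iy; iz; iz] s)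
   + g ord0 iy * (mono [:: ix; ix; iz] s + mono [:: ix; iz; iz] s)
   + g ord0 iz * (mono [:: ix; ix; iy] s + mono [:: ix; iy; iy] s))%R.

(* For an abelian group the conjugates g_i in theta_g are all g, so theta_g
   just inserts g at every position with alternating signs; in this form it
   visibly commutes with the coboundary.  The class alpha
   is represented by the integral Bockstein cocycle (1/2) d(x~ y~ z~), where
   x~, y~, z~ are the 0/1-valued integral lifts of x, y, z; its reduction is
   Sq^1(xyz) on the nose, and inserting g into Sq^1(xyz) gives the stated
   cochain exactly mod 2.  If theta_g(alpha) were 0, that cochain would be a
   mod 2 coboundary; but the pairing with the mod 2 cycle
   [u|u|v] + [u|v|u] + [v|u|u] + [1|1|v] + [1|v|1] + [v|1|1]
   kills coboundaries, and for u, v two of the basis vectors it extracts the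
   remaining coordinate of g. *)

From mathcomp Require Import all_boot all_algebra all_fingroup ring.
Set Implicit Arguments. Unset Strict Implicit. Unset Printing Implicit Defensive.
Import GRing.Theory.
Local Open Scope ring_scope.

Lemma eq_pchar2 (R : nzRingType) (x y z : R) :
  2 \in [pchar R] -> x = y + 2%:R * z -> x = y.
Proof. by move=> /pcharf0 -> ->; rewrite mul0r addr0. Qed.

Section Cochains.
Variable gT : finGroupType.

Lemma sgnzB (M : zmodType) b (x y : M) : sgnz b (x - y) = sgnz b x - sgnz b y.
Proof. by case: b; rewrite /sgnz ?opprD. Qed.

Lemma coboundary0 (M : zmodType) (s : seq gT) :
  coboundary (fun _ => 0 : M) s = 0.
Proof.
have sgnz0 b : sgnz b (0 : M) = 0 by case: b; rewrite /sgnz ?oppr0.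
by rewrite /coboundary big1 ?sgnz0 ?addr0 // => i _; rewrite sgnz0.
Qed.

Lemma coboundaryB (M : zmodType) (f1 f2 : cochain gT M) s :
  coboundary (fun t => f1 t - f2 t) s = coboundary f1 s - coboundary f2 s.
Proof.
have shuffle (a1 b1 c1 a2 b2 c2 : M) :
    a1 - a2 + (b1 - b2) + (c1 - c2) = a1 + b1 + c1 - (a2 + b2 + c2).
  by rewrite [a1 - a2 + _]addrACA -opprD addrACA -opprD.
rewrite /coboundary; under eq_bigr do rewrite sgnzB.
by rewrite sumrB !sgnzB shuffle.
Qed.

Lemma red2_coboundary (phi : cochain gT int) s :
  red2 (coboundary phi) s = coboundary (red2 phi) s.
Proof.
have red2_sgnz b x : (sgnz b x)%:~R = sgnz b x%:~R :> 'F_2.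
  by case: b; rewrite /sgnz ?rmorphN.
rewrite /red2 /coboundary !rmorphD rmorph_sum /= red2_sgnz.
by under eq_bigr do rewrite red2_sgnz.
Qed.

Definition theta_central (M : zmodType) (g : gT) (f : cochain gT M) : cochain gT M :=
  fun u => \sum_(i < (size u).+1) sgnz (odd (i + size u)) (f (take i u ++ g :: drop i u)).

Lemma theta_centralE (g : gT) (phi : cochain gT int) :
  (forall h, commute g h) -> theta g phi =1 theta_central g phi.
Proof.
move=> gC u; rewrite /theta_central big_ord_recl /= take0 drop0.
congr (_ + _); apply: eq_bigr => i _.
by have /conjg_fixP -> : ([~ g, prodg (take i.+1 u)] == 1)%g by apply/commgP.
Qed.

Lemma theta_central3E (M : zmodType) g (f : cochain gT M) a b c :
  theta_central g f [:: a; b; c] =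
  - f [:: g; a; b; c] + f [:: a; g; b; c] - f [:: a; b; g; c] + f [:: a; b; c; g].
Proof. by rewrite /theta_central /= !big_ord_recr big_ord0 /= add0r. Qed.

Lemma theta_central_coboundary (R : comPzRingType) g (psi : cochain gT R) a b c :
    commute g a -> commute g b -> commute g c ->
  theta_central g (coboundary psi) [:: a; b; c] =
  coboundary (theta_central g psi) [:: a; b; c].
Proof.
move=> ga gb gc.
rewrite theta_central3E /coboundary /theta_central /= !big_ord_recr !big_ord0 /=.
rewrite /mulpair /= ga gb gc.
ring.
Qed.

Definition eval_cycle3 (M : zmodType) (f : cochain gT M) (u v : gT) : M :=
  f [:: u; u; v] + f [:: u; v; u] + f [:: v; u; u]
  + f [:: 1%g; 1%g; v] + f [:: 1%g; v; 1%g] + f [:: v; 1%g; 1%g].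

Lemma eval_cycle3_coboundary (R : comNzRingType) (rho : cochain gT R) u v :
  2 \in [pchar R] -> commute u v -> (u * u = 1)%g ->
  eval_cycle3 (coboundary rho) u v = 0.
Proof.
move=> R2 uv uu.
rewrite /eval_cycle3 /coboundary /= !big_ord_recr !big_ord0 /= /mulpair /=.
rewrite uu uv !mul1g !mulg1.
apply: (eq_pchar2 R2 (z := rho [:: u; (v * u)%g] - rho [:: (v * u)%g; u])).
ring.
Qed.

End Cochains.

Lemma pchar_F2 : 2 \in [pchar 'F_2].
Proof. exact: pchar_Fp. Qed.

Lemma commute_G (g h : G) : commute g h.
Proof. exact: addrC. Qed.

Lemma mulgg_G (u : G) : (u * u = 1)%g.
Proof. by apply/rowP => i; rewrite !mxE (addrr_pchar2 pchar_F2). Qed.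

Definition lift01 (t : 'F_2) : int := (t : nat)%:Z.

Lemma lift01D s t : lift01 (s + t) = lift01 s + lift01 t - 2 * lift01 s * lift01 t.
Proof. by case: s t => [[|[|?]] ?] // [[|[|?]] ?]. Qed.

Lemma lift01K t : (lift01 t)%:~R = t.
Proof. by case: t => [[|[|?]] ?] //; apply: val_inj. Qed.

Definition int_coord (g : G) (i : 'I_3) : int := lift01 (g ord0 i).

Lemma int_coordM g h i :
  int_coord (g * h)%g i = int_coord g i + int_coord h i - 2 * int_coord g i * int_coord h i.
Proof. by rewrite /int_coord mxE lift01D. Qed.

(* Half the coboundary of the integral lift
   (a, b, c) |-> int_coord a ix * int_coord b iy * int_coord c iz of xyz. *)
Definition bockstein_xyz : cochain G int := fun s =>
  let c i k := int_coord (nth 1%g s i) k in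
  c 0 ix * c 1 ix * c 2 iy * c 3 iz - c 0 ix * c 1 iy * c 2 iy * c 3 iz
  + c 0 ix * c 1 iy * c 2 iz * c 3 iz.

Lemma bockstein_xyz_cocycle : is_cocycle 4 bockstein_xyz.
Proof.
case=> [|a [|b [|c [|d [|f [|? ?]]]]]] //= _.
rewrite /coboundary /= !big_ord_recr big_ord0 /= /mulpair /= /bockstein_xyz /=.
rewrite !int_coordM.
ring.
Qed.

Lemma red2_bockstein_xyz s : size s = 4%N -> red2 bockstein_xyz s = sq1xyz s.
Proof.
case: s => [|a [|b [|c [|d [|? ?]]]]] //= _.
rewrite /red2 /bockstein_xyz /sq1xyz /mono /= !big_cons big_nil /=.
rewrite !rmorphD !rmorphN !rmorphM /= /int_coord !lift01K (oppr_pchar2 pchar_F2).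
ring.
Qed.

Lemma theta_central_sq1xyz (g a b c : G) :
  theta_central g sq1xyz [:: a; b; c] = theta_target g [:: a; b; c].
Proof.
rewrite theta_central3E /sq1xyz /theta_target /mono /= !big_cons !big_nil /=.
rewrite !(oppr_pchar2 pchar_F2).
apply: (eq_pchar2 pchar_F2
  (z := a ord0 ix * b ord0 iy * c ord0 iz * (g ord0 ix + g ord0 iy + g ord0 iz))).
ring.
Qed.

Lemma red2_theta (phi : cochain G int) (psi : cochain G 'F_2) g :
    (forall t, size t = 4%N -> red2 phi t - sq1xyz t = coboundary psi t) ->
  forall s, size s = 3%N ->
  red2 (theta g phi) s = theta_target g s + coboundary (theta_central g psi) s.
Proof.
move=> red2_phi [|a [|b [|c [|? ?]]]] //= _.
have red2_phiE t : size t = 4%N -> (phi t)%:~R = sq1xyz t + coboundary psi t.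
  by move/red2_phi <-; rewrite addrC subrK.
have gC := commute_G g.
rewrite /red2 (theta_centralE _ gC) theta_central3E !rmorphD !rmorphN /= !red2_phiE //.
rewrite -theta_central_sq1xyz -(theta_central_coboundary _ (gC a) (gC b) (gC c)).
rewrite !theta_central3E.
ring.
Qed.

Lemma theta_target_coboundary_eq1 (g : G) : is_coboundary 3 (theta_target g) -> g = 1%g.
Proof.
case=> rho targetE.
have cycle0 u v : eval_cycle3 (theta_target g) u v = 0.
  rewrite /eval_cycle3 !targetE //.
  exact: (eval_cycle3_coboundary rho pchar_F2 (commute_G u v) (mulgg_G u)).
pose e i : G := delta_mx ord0 i.
apply/rowP => i; rewrite mxE.
case: i => [[|[|[|?]]] ?] //; [
  rewrite -(cycle0 (e iy) (e iz)) | rewrite -(cycle0 (e ix) (e iz)) |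
  rewrite -(cycle0 (e ix) (e iy))];
  rewrite /eval_cycle3 /theta_target /mono /e /= !big_cons !big_nil /= !mxE /=;
  rewrite !(mul0r, mulr0, mul1r, mulr1, addr0, add0r); congr (g _ _); exact: val_inj.
Qed.

Local Close Scope ring_scope.

Theorem lemma5p2 :
  (exists phi : cochain G int,
      is_cocycle 4 phi /\ cohomologous 4 (red2 phi) sq1xyz) /\
  (forall phi : cochain G int,
      is_cocycle 4 phi -> cohomologous 4 (red2 phi) sq1xyz ->
      forall g : G,
        cohomologous 3 (red2 (theta g phi)) (theta_target g) /\
        (g <> 1%g -> ~ is_coboundary 3 (theta g phi))).
Proof.
split.
  exists bockstein_xyz; split; first exact: bockstein_xyz_cocycle.
  by exists (fun _ => 0%R) => s s4; rewrite coboundary0 red2_bockstein_xyz // subrr.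
move=> phi _ [psi red2_phi] g; split.
  exists (theta_central g psi) => s s3.
  by rewrite (red2_theta g red2_phi) // addrAC subrr add0r.
move=> ntg [eta theta_eta]; apply/ntg/theta_target_coboundary_eq1.
exists (fun t => red2 eta t - theta_central g psi t)%R => s s3.
rewrite coboundaryB -red2_coboundary /red2 -theta_eta // -/(red2 _ s).
by rewrite (red2_theta g red2_phi) // addrK.
Qed.
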